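(* Let $b,M\in\mathbb{N}$, let $f_i<f_{i+1}$ be consecutive Farey fractions of order $M$, and let $\varepsilon\in(f_i,f_{i+1})$ be irrational. If $\mathcal{L}_M(\varepsilon)$ contains both words of some $b$-amicable pair, then \[ b\le\min\{\lfloor Mf_i\rfloor+1,\ M-\lfloor Mf_i\rfloor\}. \]
   Context: For irrational $\varepsilon\in(0,1)$, let $T_\varepsilon:[0,1)\to[0,1)$, $T_\varepsilon(x)=x+1-\varepsilon$ on $[0,\varepsilon)$ and $x-\varepsilon$ on $[\varepsilon,1)$; the coding $u_{\varepsilon,x_0}\in\{0,1\}^{\mathbb{Z}}$ has $u_n=0$ if $T^n_\varepsilon(x_0)\in[0,\varepsilon)$ and $1$ otherwise. $\mathcal{L}_M(\varepsilon)$ is the set of length-$M$ factors of $u_{\varepsilon,x_0}$ (independent of $x_0$). Farey fractions of order $M$: reduced fractions in $[0,1]$ with denominator $\le M$, ordered $0=f_0<\dots<f_r=1$. 3iet words: for irrational $\varepsilon\in(0,1)$ and $\max\{\varepsilon,1-\varepsilon\}<\ell<1$, let $T_{\varepsilon,\ell}$ on $[0,\ell)$ be $x\mapsto x+1-\varepsilon$ on $I_A=[0,\ell-1+\varepsilon)$, $x\mapsto x+1-2\varepsilon$ on $I_B=[\ell-1+\varepsilon,\varepsilon)$, $x\mapsto x-\varepsilon$ on $I_C=[\varepsilon,\ell)$; the word $u_{\varepsilon,\ell,x_0}\in\{A,B,C\}^{\mathbb{Z}}$ has $u_n=X$ iff $T^n_{\varepsilon,\ell}(x_0)\in I_X$.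 A 3iet factor is a finite factor of some such word. Morphisms $\sigma_{01},\sigma_{10}:\{A,B,C\}^*\to\{0,1\}^*$: $\sigma_{01}(A)=0,\sigma_{01}(B)=01,\sigma_{01}(C)=1$ and $\sigma_{10}(A)=0,\sigma_{10}(B)=10,\sigma_{10}(C)=1$. Two words $w^{(1)},w^{(2)}\in\{0,1\}^*$ form a $b$-amicable pair if there is a 3iet factor $w$ with exactly $b$ letters $B$ such that $w^{(1)}=\sigma_{01}(w)$ and $w^{(2)}=\sigma_{10}(w)$; its length is the common length $|w|+b$ of $w^{(1)},w^{(2)}$. *)

From Stdlib Require Import Reals ZArith List.
Import ListNotations.
Open Scope R_scope.

Definition irrational (x : R) : Prop :=
  ~ exists p q : Z, q <> 0%Z /\ x = IZR p / IZR q.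

(* Binary letters: false = 0, true = 1. *)

Definition Trot (eps x : R) : R :=
  if Rlt_dec x eps then x + 1 - eps else x - eps.

Definition code_rot (eps x : R) : bool :=
  if Rlt_dec x eps then false else true.

Definition rot_orbit (eps : R) (y : Z -> R) : Prop :=
  (forall n : Z, 0 <= y n < 1) /\ (forall n : Z, y (n + 1)%Z = Trot eps (y n)).

(* L_M(eps): the length-M factors of the codings u_{eps,x0} (union over x0 in [0,1),
   which equals the set for any single x0) *)
Definition LM (M : nat) (eps : R) (w : list bool) : Prop :=
  length w = M /\
  exists y : Z -> R, rot_orbit eps y /\
  exists n : Z, w = map (fun k => code_rot eps (y (n + Z.of_nat k)%Z)) (seq 0 M).

Definition farey (M : nat) (x : R) : Prop :=
  exists p q : nat, (1 <= q <= M)%nat /\ (p <= q)%nat /\ x = INR p / INR q.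

Definition consecutive_farey (M : nat) (f1 f2 : R) : Prop :=
  farey M f1 /\ farey M f2 /\ f1 < f2 /\
  ~ exists x : R, farey M x /\ f1 < x < f2.

Inductive L3 : Set := LA | LB | LC.

Definition T3 (eps l x : R) : R :=
  if Rlt_dec x (l - 1 + eps) then x + 1 - eps
  else if Rlt_dec x eps then x + 1 - 2 * eps
  else x - eps.

Definition code3 (eps l x : R) : L3 :=
  if Rlt_dec x (l - 1 + eps) then LA
  else if Rlt_dec x eps then LB
  else LC.

Definition iet_orbit (eps l : R) (y : Z -> R) : Prop :=
  (forall n : Z, 0 <= y n < l) /\ (forall n : Z, y (n + 1)%Z = T3 eps l (y n)).

Definition iet3_factor (w : list L3) : Prop :=
  exists eps l : R, irrational eps /\ 0 < eps < 1 /\ Rmax eps (1 - eps) < l /\ l < 1 /\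
  exists y : Z -> R, iet_orbit eps l y /\
  exists n : Z, w = map (fun k => code3 eps l (y (n + Z.of_nat k)%Z)) (seq 0 (length w)).

Definition sigma01 (a : L3) : list bool :=
  match a with LA => [false] | LB => [false; true] | LC => [true] end.
Definition sigma10 (a : L3) : list bool :=
  match a with LA => [false] | LB => [true; false] | LC => [true] end.

Definition count_B (w : list L3) : nat :=
  length (filter (fun a => match a with LB => true | _ => false end) w).

Definition amicable (b : nat) (w1 w2 : list bool) : Prop :=
  exists w : list L3, iet3_factor w /\ count_B w = b /\
    w1 = flat_map sigma01 w /\ w2 = flat_map sigma10 w.

From Stdlib Require Import Reals ZArith List Lra Lia.
Open Scope R_scope.

(* Let w be the 3iet factor with w1 = sigma01 w, and let m be the
   floor of M*f1.
   - Counting: every letter B of w yields one 0 and one 1 in sigma01 w, so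
     b <= #0(w1) and b <= #1(w1) = M - #0(w1).
   - Balance: along a T_eps-orbit every step subtracts eps and adds 1 exactly
     when the letter read is 0; since the orbit stays in [0,1), a length-M
     factor of the rotation coding has |#0 - M*eps| < 1.
   - Farey: (m+1)/M is a Farey fraction of order M larger than f1, hence at
     least f2 > eps; so m < M*eps < m+1 and the balance bound gives
     m <= #0(w1) <= m+1.
   Combining, b <= m+1 and b <= M - m. *)

Definition zeros (l : list bool) : nat := length (filter negb l).
Definition ones (l : list bool) : nat := length (filter (fun x => x) l).

Lemma length_zeros_ones (l : list bool) : length l = (zeros l + ones l)%nat.
Proof. unfold zeros, ones; induction l as [|[] l IH]; simpl; lia. Qed.

Lemma zeros_app (l1 l2 : list bool) : zeros (l1 ++ l2) = (zeros l1 + zeros l2)%nat.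
Proof. unfold zeros; rewrite filter_app, length_app; reflexivity. Qed.

Lemma ones_app (l1 l2 : list bool) : ones (l1 ++ l2) = (ones l1 + ones l2)%nat.
Proof. unfold ones; rewrite filter_app, length_app; reflexivity. Qed.

(* Each B contributes the factor 01 to sigma01 w, hence one 0 and one 1. *)
Lemma count_B_le_sigma01 (w : list L3) :
  (count_B w <= zeros (flat_map sigma01 w))%nat /\
  (count_B w <= ones (flat_map sigma01 w))%nat.
Proof.
  induction w as [|a w IH]; simpl.
  - unfold zeros, ones, count_B; simpl; lia.
  - rewrite zeros_app, ones_app; unfold count_B, zeros, ones in *.
    destruct a; simpl; lia.
Qed.

Lemma rot_orbit_displacement (eps : R) (y : Z -> R) (n : Z) (K : nat) :
  rot_orbit eps y ->
  y (n + Z.of_nat K)%Z = y n - INR K * eps +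
     INR (zeros (map (fun k => code_rot eps (y (n + Z.of_nat k)%Z)) (seq 0 K))).
Proof.
  intros [_ Hstep]. induction K as [|K IH].
  - rewrite Z.add_0_r; unfold zeros; simpl; lra.
  - rewrite seq_S, map_app, zeros_app; simpl map.
    replace (n + Z.of_nat (S K))%Z with ((n + Z.of_nat K) + 1)%Z by lia.
    rewrite Hstep, S_INR, plus_INR.
    unfold Trot; unfold zeros at 2; unfold code_rot at 2.
    destruct (Rlt_dec (y (n + Z.of_nat K)%Z) eps); simpl; rewrite IH; lra.
Qed.

Lemma LM_zeros_balance (M : nat) (eps : R) (w : list bool) :
  LM M eps w -> INR M * eps - 1 < INR (zeros w) < INR M * eps + 1.
Proof.
  intros (_ & y & Hy & n & ->).
  pose proof (rot_orbit_displacement eps y n M Hy) as Hd.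
  destruct Hy as [Hbound _].
  pose proof (Hbound n); pose proof (Hbound (n + Z.of_nat M)%Z).
  lra.
Qed.

Lemma farey_bounds (M : nat) (x : R) : farey M x -> (1 <= M)%nat /\ 0 <= x <= 1.
Proof.
  intros (p & q & Hq & Hpq & ->). split; [lia|].
  assert (0 < INR q) by (apply lt_0_INR; lia).
  assert (INR p <= INR q) by (apply le_INR; lia).
  pose proof (pos_INR p).
  assert (INR p / INR q * INR q = INR p) by (field; lra).
  split; nra.
Qed.

(* Between consecutive Farey fractions f1 < f2 no point p/M is strictly inside,
   so m = floor(M*f1) satisfies m < M*eps < m + 1 for every f1 < eps < f2. *)
Lemma farey_gap_floor (M : nat) (f1 f2 eps : R) :
  consecutive_farey M f1 f2 -> f1 < eps < f2 ->
  IZR (Int_part (INR M * f1)) < INR M * eps < IZR (Int_part (INR M * f1)) + 1.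
Proof.
  intros (F1 & F2 & Hf12 & Hgap) Heps.
  destruct (farey_bounds _ _ F1) as [HM1 Hf1].
  destruct (farey_bounds _ _ F2) as [_ Hf2].
  set (m := Int_part (INR M * f1)).
  destruct (base_Int_part (INR M * f1)) as [Hm1 Hm2]; fold m in Hm1, Hm2.
  assert (HM : 1 <= INR M) by (apply (le_INR 1); lia).
  assert (Hm0 : (-1 < m)%Z) by (apply lt_IZR; nra).
  assert (HmM : (m < Z.of_nat M)%Z)
    by (apply lt_IZR; rewrite <- INR_IZR_INZ; nra).
  (* the candidate Farey fraction r = (m+1)/M just above f1 *)
  set (k := Z.to_nat (m + 1)).
  assert (Hk : INR k = IZR m + 1)
    by (unfold k; rewrite INR_IZR_INZ, Z2Nat.id, plus_IZR by lia; reflexivity).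
  set (r := INR k / INR M).
  assert (Hr : r * INR M = INR k) by (unfold r; field; lra).
  assert (Hfarey : farey M r) by (exists k, M; unfold k; repeat split; lia).
  assert (Hf1r : f1 < r) by nra.
  assert (Hf2r : f2 <= r).
  { apply Rnot_lt_le; intro Hlt; apply Hgap; exists r; tauto. }
  split; nra.
Qed.

Lemma Z_near_floor (m z : Z) (x : R) :
  IZR m < x < IZR m + 1 -> x - 1 < IZR z < x + 1 -> (m <= z <= m + 1)%Z.
Proof.
  intros Hx Hz.
  assert (Hlo : (m - 1 < z)%Z) by (apply lt_IZR; rewrite minus_IZR; lra).
  assert (Hhi : (z < m + 2)%Z) by (apply lt_IZR; rewrite plus_IZR; lra).
  lia.
Qed.

Theorem mainTheorem4 (b M : nat) (f1 f2 eps : R) :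
  consecutive_farey M f1 f2 ->
  f1 < eps < f2 -> irrational eps ->
  (exists w1 w2 : list bool, amicable b w1 w2 /\ LM M eps w1 /\ LM M eps w2) ->
  (Z.of_nat b <= Z.min (Int_part (INR M * f1) + 1)
                        (Z.of_nat M - Int_part (INR M * f1)))%Z.
Proof.
  intros Hfarey Heps _ (w1 & w2 & (w & _ & HB & Hw1 & _) & HL1 & _).
  pose proof (farey_gap_floor M f1 f2 eps Hfarey Heps) as Hfloor.
  pose proof (LM_zeros_balance M eps w1 HL1) as Hbal.
  set (m := Int_part (INR M * f1)) in *.
  rewrite (INR_IZR_INZ (zeros w1)) in Hbal.
  pose proof (Z_near_floor m _ _ Hfloor Hbal) as Hzeros.
  destruct (count_B_le_sigma01 w) as [Hb0 Hb1]; rewrite <- Hw1, HB in Hb0, Hb1.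
  pose proof (length_zeros_ones w1) as Hlen.
  destruct HL1 as [HlenM _].
  lia.
Qed.
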